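(* Let $d\ge2$, let $p_1,\dots,p_{d+1}$ be the vertices of a regular $d$-simplex inscribed in the unit sphere centered at the origin, and for each $i$ let $q_i$ be the point on the ray from the origin through the circumcenter of the facet opposite $p_i$ at distance $\rho>20d$ from the origin. Let $\mathcal Q=\{p_1,\dots,p_{d+1},q_1,\dots,q_{d+1}\}$, $\mathcal D(\mathcal Q)$ its Delaunay complex and $\mathring{\mathcal D}(\mathcal Q)=\mathcal D(\mathcal Q\cup\{\mathbf 0\})$. Then: (1) $\mathring{\mathcal D}(\mathcal Q)\setminus\mathcal D(\mathcal Q)$ consists of at most $2^{d+1}$ simplices, whose maximum weight is $d/2$ and minimum weight is $1/2$; (2) $\mathcal D(\mathcal Q)\setminus\mathring{\mathcal D}(\mathcal Q)$ consists of a single $d$-simplex, of weight $1$.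
   Context: For a finite set $\mathcal X\subset\mathbb{R}^d$, $\mathrm{Vor}_{\mathcal X}(x)=\{y:|y-x|\le|y-x'|\ \forall x'\in\mathcal X\}$; the Delaunay complex $\mathcal D(\mathcal X)$ consists of all $[x_0,\dots,x_k]$ with $\bigcap_i\mathrm{Vor}_{\mathcal X}(x_i)\ne\emptyset$, with weight $w([x_0,\dots,x_k])=\inf\{s:\bigcap_i(B_s(x_i)\cap\mathrm{Vor}_{\mathcal X}(x_i))\ne\emptyset\}$, computed in the complex containing the simplex. *)

From HB Require Import structures.
From mathcomp Require Import all_boot all_order all_algebra.
From mathcomp Require Import finmap.
From mathcomp Require Import boolp classical_sets reals.
Set Implicit Arguments. Unset Strict Implicit. Unset Printing Implicit Defensive.
Import Order.TTheory GRing.Theory Num.Theory.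
Local Open Scope ring_scope.
Local Open Scope fset_scope.

Section Delaunay.
Variables (R : realType) (d : nat).
Notation pt := 'rV[R]_d.

Definition edist (x y : pt) : R := Num.sqrt (\sum_(i < d) (x 0 i - y 0 i) ^+ 2).

Definition Vor (X : {fset pt}) (x : pt) : set pt :=
  [set y | forall x', x' \in X -> edist y x <= edist y x'].

Definition Delaunay (X : {fset pt}) : set {fset pt} :=
  [set S | [/\ S != fset0, S `<=` X & exists y, forall x, x \in S -> Vor X x y]].

Definition dweight (X : {fset pt}) (S : {fset pt}) : R :=
  inf [set s : R | exists y, forall x, x \in S -> edist y x <= s /\ Vor X x y].

Definition facet_circumcenter (p : 'I_d.+1 -> pt) (i : 'I_d.+1) (c : pt) : Prop :=
  (exists a : 'I_d.+1 -> R,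
      [/\ a i = 0, \sum_j a j = 1 & c = \sum_j a j *: p j])
  /\ forall j k, j != i -> k != i -> edist c (p j) = edist c (p k).

End Delaunay.

(* The vertices p i of the regular simplex are unit vectors with pairwise inner
   products -1/d summing to 0, and q i = -rho p i.  For a centre y all Voronoi
   inequalities are therefore linear in a_j = <y, p_j>, with sum_j a_j = 0.
   A point of the cell of 0 has a_j <= 1/2 for all j, hence a_i >= -d/2, while
   a point of the cell of q i has a_i <= -rho/2: so after adding 0 no simplex
   joins 0 to a q i, nor 0 to all p j (that needs every a_j >= 1/2).  The new
   simplices are thus 0 joined with a proper face of the inner simplex; each
   lies on the empty ball of radius d/2 centred at -(d/2) p i through 0 and the
   facet opposite p i, and Cauchy-Schwarz |y| >= |a_j| with a_j = 1/2 on the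
   face gives the lower bounds 1/2 and d/2.  Conversely the cell of q i lies
   closer to q i than to 0, so the only Delaunay simplex of Q destroyed by 0 is
   the inner simplex itself, with circumcentre 0 and circumradius 1. *)

From HB Require Import structures.
From mathcomp Require Import all_boot all_order all_algebra.
From mathcomp Require Import finmap.
From mathcomp Require Import boolp classical_sets reals.
From mathcomp Require Import ring lra.
Set Implicit Arguments. Unset Strict Implicit. Unset Printing Implicit Defensive.
Import Order.TTheory GRing.Theory Num.Theory.
Local Open Scope ring_scope.

Section InnerProduct.
Variables (R : realType) (d : nat).
Local Notation pt := 'rV[R]_d.

Definition dot (x y : pt) : R := \sum_(k < d) x 0 k * y 0 k.
Definition sqnorm (x : pt) : R := dot x x.

Lemma dotC x y : dot x y = dot y x.
Proof. by apply: eq_bigr => k _; rewrite mulrC. Qed.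

Lemma dot_sumr (I : finType) x (f : I -> pt) : dot x (\sum_i f i) = \sum_i dot x (f i).
Proof. by rewrite /dot exchange_big; apply: eq_bigr => k _; rewrite summxE mulr_sumr. Qed.

Lemma dotDr x y z : dot x (y + z) = dot x y + dot x z.
Proof. by rewrite /dot -big_split; apply: eq_bigr => k _; rewrite !mxE mulrDr. Qed.

Lemma dotNr x y : dot x (- y) = - dot x y.
Proof. by rewrite /dot -sumrN; apply: eq_bigr => k _; rewrite !mxE mulrN. Qed.

Lemma dotZr a x y : dot x (a *: y) = a * dot x y.
Proof. by rewrite /dot mulr_sumr; apply: eq_bigr => k _; rewrite !mxE mulrCA. Qed.

Lemma dot0r x : dot x 0 = 0.
Proof. by rewrite -(scale0r 0) dotZr mul0r. Qed.

Lemma dot0l x : dot 0 x = 0.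
Proof. by rewrite dotC dot0r. Qed.

Lemma dotZl a x y : dot (a *: x) y = a * dot x y.
Proof. by rewrite dotC dotZr dotC. Qed.

Lemma sqnormB x y : sqnorm (x - y) = sqnorm x - 2 * dot x y + sqnorm y.
Proof. by rewrite /sqnorm dotDr dotNr !(dotC (x - y)) !dotDr !dotNr (dotC y x); ring. Qed.

Lemma sqnormZ a x : sqnorm (a *: x) = a ^+ 2 * sqnorm x.
Proof. by rewrite /sqnorm dotZl dotZr mulrA. Qed.

Lemma sqnormN x : sqnorm (- x) = sqnorm x.
Proof. by rewrite -scaleN1r sqnormZ sqrrN expr1n mul1r. Qed.

Lemma sqnorm_ge0 x : 0 <= sqnorm x.
Proof. by apply: sumr_ge0 => k _; rewrite -expr2 sqr_ge0. Qed.

Lemma sqnorm0 : sqnorm 0 = 0.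
Proof. exact: dot0r. Qed.

Lemma sqnorm_eq0 x : sqnorm x = 0 -> x = 0.
Proof.
move/eqP; rewrite psumr_eq0 => [/allP x0|k _]; last by rewrite -expr2 sqr_ge0.
apply/rowP => k; rewrite mxE; have := x0 k (mem_index_enum _).
by rewrite -expr2 sqrf_eq0 => /eqP.
Qed.

Lemma edistE x y : edist x y = Num.sqrt (sqnorm (x - y)).
Proof. by congr Num.sqrt; apply: eq_bigr => k _; rewrite !mxE expr2. Qed.

Lemma edist_ge0 (x y : pt) : 0 <= edist x y.
Proof. exact: sqrtr_ge0. Qed.

Lemma sqr_edist x y : edist x y ^+ 2 = sqnorm (x - y).
Proof. by rewrite edistE sqr_sqrtr // sqnorm_ge0. Qed.

Lemma ler_edist y x x' : (edist y x <= edist y x') = (sqnorm (y - x) <= sqnorm (y - x')).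
Proof. by rewrite !edistE ler_sqrt // sqnorm_ge0. Qed.

Lemma edist_geE r y x : 0 <= r -> (r <= edist y x) = (r ^+ 2 <= sqnorm (y - x)).
Proof. by move=> r0; rewrite edistE -[r in r <= _]ger0_norm // -sqrtr_sqr ler_sqrt ?sqnorm_ge0. Qed.

Lemma edist_sqnorm r y x : 0 <= r -> sqnorm (y - x) = r ^+ 2 -> edist y x = r.
Proof. by move=> r0 yx; rewrite edistE yx sqrtr_sqr ger0_norm. Qed.

(* Cauchy-Schwarz against a unit vector: expand [0 <= |y - <y,u> u|^2]. *)
Lemma sqr_dot_le_sqnorm y u : sqnorm u = 1 -> dot y u ^+ 2 <= sqnorm y.
Proof.
move=> u1; have := sqnorm_ge0 (y - dot y u *: u).
by rewrite sqnormB sqnormZ dotZr u1; lra.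
Qed.

Lemma norm_dot_le_edist0 y u : sqnorm u = 1 -> `|dot y u| <= edist y 0.
Proof.
move=> u1; rewrite edistE subr0 -sqrtr_sqr ler_sqrt ?sqnorm_ge0 //.
exact: sqr_dot_le_sqnorm.
Qed.

Lemma exists_linear_relation n (p : 'I_n -> pt) : (d < n)%N ->
  exists2 v : 'I_n -> R, (exists i, v i != 0) & \sum_i v i *: p i = 0.
Proof.
move=> dn; pose M : 'M[R]_(n, d) := \matrix_(i, k) p i 0 k.
have : ~~ row_free M by rewrite /row_free neq_ltn (leq_ltn_trans (rank_leq_col M)).
rewrite -kermx_eq0 => /rowV0Pn [v /sub_kermxP vM /rV0Pn [i vi]].
exists (fun i => v 0 i); first by exists i.
rewrite -[RHS]vM mulmx_sum_row; apply: eq_bigr => j _; congr (_ *: _).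
by apply/rowP => k; rewrite !mxE.
Qed.

End InnerProduct.

Lemma sumr_neq_const (R : ringType) n (i : 'I_n.+1) (c : R) :
  \sum_(j | j != i) c = c * n%:R.
Proof.
by rewrite (eq_bigl (mem (predC1 i))) // sumr_const cardC1 card_ord mulr_natr.
Qed.

Lemma ler_sumr_neq (R : numDomainType) n (a : 'I_n.+1 -> R) i c :
  (forall j, j != i -> a j <= c) -> \sum_(j | j != i) a j <= c * n%:R.
Proof. by move=> ac; rewrite -(sumr_neq_const i); apply: ler_sum. Qed.

Lemma ger_sumr_neq (R : numDomainType) n (a : 'I_n.+1 -> R) i c :
  (forall j, j != i -> c <= a j) -> c * n%:R <= \sum_(j | j != i) a j.
Proof. by move=> ca; rewrite -(sumr_neq_const i); apply: ler_sum. Qed.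

Section RegularSimplex.
Variables (R : realType) (d : nat) (p : 'I_d.+1 -> 'rV[R]_d).
Hypothesis p_unit : forall i, sqnorm (p i) = 1.

Lemma dim_gt0 : (0 < d)%N.
Proof.
case: (posnP d) => // d0; have := p_unit ord0.
rewrite /sqnorm /dot big_pred0 => [/eqP|k]; first by rewrite eq_sym oner_eq0.
by have := ltn_ord k; rewrite {2}d0.
Qed.

Lemma dot_combination g (v : 'I_d.+1 -> R) k :
  (forall i j, i != j -> dot (p i) (p j) = g) ->
  dot (p k) (\sum_i v i *: p i) = v k + g * (\sum_i v i - v k).
Proof.
move=> p_dot; rewrite dot_sumr (bigD1 k) //= dotZr [dot _ _]p_unit mulr1.
rewrite [\sum_i v i](bigD1 k) //= addrAC subrr add0r mulr_sumr; congr (_ + _).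
by apply: eq_bigr => j jk; rewrite dotZr p_dot 1?eq_sym // mulrC.
Qed.

(* d + 1 unit vectors of R^d with a common pairwise inner product g != 1:
   a linear relation between them must have equal coefficients, so they sum
   to 0, and then <p i, sum p> = 1 + d g = 0. *)
Lemma regular_simplex_gram g :
  (forall i j, i != j -> dot (p i) (p j) = g) -> g != 1 ->
  g = - d%:R^-1 /\ \sum_i p i = 0.
Proof.
move=> p_dot g1.
have [v [i0 vi0] rel] := exists_linear_relation p (ltnSn d).
have g1' : 1 - g != 0 by rewrite subr_eq0 eq_sym.
have vk k : v k * (1 - g) = - g * \sum_i v i.
  have := dot_combination v k p_dot; rewrite rel dot0r => E.
  by apply/eqP; rewrite -subr_eq0; apply/eqP; rewrite [RHS]E; ring.
have vconst k : v k = v i0 by apply: (mulIf g1'); rewrite !vk.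
have p_sum : \sum_i p i = 0.
  have : v i0 *: \sum_i p i = 0.
    by rewrite scaler_sumr -[RHS]rel; apply: eq_bigr => k _; rewrite vconst.
  by move/eqP; rewrite scaler_eq0 (negbTE vi0) => /eqP.
split=> //; have := congr1 (dot (p i0)) p_sum.
rewrite dot0r dot_sumr (bigD1 i0) //= [dot _ _]p_unit.
rewrite (eq_bigr (fun _ => g)) => [|j ji]; last by rewrite p_dot // eq_sym.
have dn0 : d%:R != 0 :> R by rewrite pnatr_eq0 -lt0n dim_gt0.
rewrite sumr_neq_const => /eqP; rewrite addr_eq0 => /eqP gd.
by rewrite -[g](mulfK dn0) -[g * _]opprK -gd mulN1r.
Qed.

Lemma regular_simplex_gram_of_edist :
  (forall i j, i != j -> p i != p j) ->
  (forall i j k l, i != j -> k != l -> edist (p i) (p j) = edist (p k) (p l)) ->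
  (forall i j, i != j -> dot (p i) (p j) = - d%:R^-1) /\ \sum_i p i = 0.
Proof.
move=> p_inj p_reg; pose g := dot (p ord0) (p ord_max).
have o0m : ord0 != ord_max :> 'I_d.+1.
  by rewrite -(inj_eq val_inj) /= eq_sym -lt0n dim_gt0.
have p_dot i j : i != j -> dot (p i) (p j) = g.
  move=> ij; have := congr1 (fun r => r ^+ 2) (p_reg i j ord0 ord_max ij o0m).
  by rewrite /= !sqr_edist !sqnormB !p_unit /g; lra.
have g1 : g != 1.
  apply: contra (p_inj _ _ o0m) => /eqP g1; apply/eqP/subr0_eq/sqnorm_eq0.
  by rewrite sqnormB !p_unit -/g g1; ring.
have [gE p_sum] := regular_simplex_gram p_dot g1.
by split=> // i j ij; rewrite p_dot // gE.
Qed.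

Hypothesis p_dot : forall i j, i != j -> dot (p i) (p j) = - d%:R^-1.
Hypothesis p_sum : \sum_i p i = 0.

Lemma facet_circumcenterE i c : facet_circumcenter p i c -> c = - d%:R^-1 *: p i.
Proof.
case=> [[a [ai0 a_sum ->]] c_eq].
have dn0 : d%:R != 0 :> R by rewrite pnatr_eq0 -lt0n dim_gt0.
have dot_c j : dot (\sum_k a k *: p k) (p j) = a j * (1 + d%:R^-1) - d%:R^-1.
  by rewrite dotC (dot_combination a j p_dot) a_sum; ring.
have e0 : 1 + d%:R^-1 != 0 :> R.
  by rewrite lt0r_neq0 // ltr_wpDr ?invr_ge0 ?ler0n.
have a_eq j k : j != i -> k != i -> a j = a k.
  move=> ji ki; have := congr1 (fun r => r ^+ 2) (c_eq j k ji ki).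
  rewrite /= !sqr_edist !sqnormB !p_unit !dot_c => E.
  by apply: (mulIf e0); lra.
have a_inv j : j != i -> a j = d%:R^-1.
  move=> ji; move: a_sum; rewrite (bigD1 i) //= ai0 add0r.
  rewrite (eq_bigr (fun _ => a j)) => [|k ki]; last exact: a_eq.
  by rewrite sumr_neq_const => ad; apply: (mulIf dn0); rewrite ad mulVf.
rewrite (bigD1 i) //= ai0 scale0r add0r.
rewrite (eq_bigr (fun k => d%:R^-1 *: p k)) => [|k ki]; last by rewrite a_inv.
rewrite -scaler_sumr scaleNr -scalerN; congr (_ *: _).
by apply/eqP; rewrite -addr_eq0 addrC -[X in _ == X]p_sum [X in _ == X](bigD1 i).
Qed.

Lemma ray_through_facet_circumcenter i c (x : 'rV[R]_d) r :
  facet_circumcenter p i c -> (exists t : R, 0 <= t /\ x = t *: c) -> edist x 0 = r ->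
  x = - r *: p i.
Proof.
move=> /facet_circumcenterE -> [t [t0 ->]]; rewrite scalerA mulrN scaleNr -scalerN.
have t_d0 : 0 <= t * d%:R^-1 by rewrite mulr_ge0 ?invr_ge0 ?ler0n.
rewrite edistE subr0 sqnormZ sqnormN p_unit mulr1 sqrtr_sqr ger0_norm // => <-.
by rewrite scaleNr scalerN.
Qed.

End RegularSimplex.

Local Open Scope fset_scope.
Local Open Scope ring_scope.

Section DelaunayWeight.
Variables (R : realType) (d : nat).
Local Notation pt := 'rV[R]_d.
Implicit Types (X S : {fset pt}) (x y : pt) (s r : R).

Definition weight_witness X S y s := forall x, x \in S -> edist y x <= s /\ Vor X x y.

Lemma Vor_le_sqnorm X x x' y : x' \in X -> Vor X x y -> sqnorm (y - x) <= sqnorm (y - x').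
Proof. by move=> x'X /(_ x' x'X); rewrite ler_edist. Qed.

Lemma Vor_fsubset X X' x y : X `<=` X' -> Vor X' x y -> Vor X x y.
Proof. by move=> /fsubsetP XX' V x' /XX'; apply: V. Qed.

Lemma Vor_fset1U X x y z : Vor X x y -> edist y x <= edist y z -> Vor (z |` X) x y.
Proof. by move=> V yz x' /fset1UP [->|]; last apply: V. Qed.

Lemma Delaunay_fsubset X X' S : X `<=` X' -> S `<=` X -> Delaunay X' S -> Delaunay X S.
Proof.
by move=> XX' SX [S0 _ [y V]]; split=> //; exists y => x /V; apply: Vor_fsubset.
Qed.

Lemma empty_ball_witness X S y r :
  (forall x, x \in X -> r <= edist y x) -> (forall x, x \in S -> edist y x = r) ->
  weight_witness X S y r.
Proof. by move=> empty sphere x /sphere yx; split=> [|x' /empty]; rewrite yx. Qed.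

Lemma weight_witness_fsubset X S S' y s :
  S' `<=` S -> weight_witness X S y s -> weight_witness X S' y s.
Proof. by move=> /fsubsetP S'S W x /S'S; apply: W. Qed.

Lemma Delaunay_witness X S y s :
  S != fset0 -> S `<=` X -> weight_witness X S y s -> Delaunay X S.
Proof. by move=> S0 SX W; split=> //; exists y => x /W []. Qed.

Lemma dweight_le X S y s : S != fset0 -> weight_witness X S y s -> dweight X S <= s.
Proof.
case/fset0Pn => x0 xS W; apply: ge_inf; last by exists y.
by exists 0 => s' [y' /(_ x0 xS) [/(le_trans (edist_ge0 _ _))]].
Qed.

Lemma dweight_ge X S y s l : weight_witness X S y s ->
  (forall y' s', weight_witness X S y' s' -> l <= s') -> l <= dweight X S.
Proof. by move=> W lb; apply: lb_le_inf; [exists s, y | move=> s' [y']; apply: lb]. Qed.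

Lemma dweight_eq X S y s : S != fset0 -> weight_witness X S y s ->
  (forall y' s', weight_witness X S y' s' -> s <= s') -> dweight X S = s.
Proof. by move=> S0 W lb; apply/le_anti; rewrite (dweight_le S0 W) (dweight_ge W lb). Qed.

End DelaunayWeight.

Section Configuration.
Variables (R : realType) (d : nat) (p q : 'I_d.+1 -> 'rV[R]_d) (rho : R).
Hypothesis p_unit : forall i, sqnorm (p i) = 1.
Hypothesis p_dot : forall i j, i != j -> dot (p i) (p j) = - d%:R^-1.
Hypothesis p_sum : \sum_i p i = 0.
Hypothesis rho_gt : d%:R < rho.
Hypothesis q_def : forall i, q i = - rho *: p i.

Local Notation P := [fset p i | i in 'I_d.+1].
Local Notation Q := (P `|` [fset q i | i in 'I_d.+1]).
Local Notation Q0 := (0 |` Q).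

Let d_ge1 : 1 <= d%:R :> R.
Proof. by rewrite ler1n (dim_gt0 p_unit). Qed.

(* [lra] and [nra] ignore section hypotheses, hence the local copies
   [have d1 := d_ge1; have rd := rho_gt] in the proofs below. *)

Lemma dot_pE i j : dot (p i) (p j) = if j == i then 1 else - d%:R^-1.
Proof. by case: eqP => [->|/eqP ji]; [exact: p_unit | rewrite p_dot // eq_sym]. Qed.

Lemma sqnorm_sub_p y j : sqnorm (y - p j) = sqnorm y - 2 * dot y (p j) + 1.
Proof. by rewrite sqnormB p_unit. Qed.

Lemma sqnorm_sub_q y j :
  sqnorm (y - q j) = sqnorm y + 2 * rho * dot y (p j) + rho ^+ 2.
Proof. by rewrite q_def sqnormB sqnormZ dotZr p_unit; ring. Qed.

Lemma dot_p_compl y i : dot y (p i) = - \sum_(j | j != i) dot y (p j).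
Proof.
apply/eqP; rewrite -addr_eq0 -(bigD1 i (P := predT)) //= -dot_sumr p_sum.
by rewrite dot0r.
Qed.

Lemma p_neq0 i : p i != 0.
Proof. by apply: contra_eqN (p_unit i) => /eqP->; rewrite sqnorm0 eq_sym oner_eq0. Qed.

Lemma p_inj : injective p.
Proof.
move=> i j pij; apply/eqP/negPn/negP => /p_dot; rewrite pij [dot _ _]p_unit => h.
have : 0 < d%:R^-1 :> R by rewrite invr_gt0 ltr0n (dim_gt0 p_unit).
by lra.
Qed.

Lemma QP x : x \in Q -> (exists i, x = p i) \/ (exists i, x = q i).
Proof. by case/fsetUP => /imfsetP [i _ ->]; [left | right]; exists i. Qed.

Lemma p_in_Q i : p i \in Q.
Proof. by apply/fsetUP; left; apply/imfsetP; exists i. Qed.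

Lemma q_in_Q i : q i \in Q.
Proof. by apply/fsetUP; right; apply/imfsetP; exists i. Qed.

Lemma p_in_Q0 i : p i \in Q0.
Proof. exact/fset1UP/or_intror/p_in_Q. Qed.

Lemma zero_notin_Q : 0 \notin Q.
Proof.
apply/negP => /QP [[i /esym/eqP]|[i]]; first by rewrite (negbTE (p_neq0 i)).
rewrite q_def => /esym/eqP; rewrite scaler_eq0 oppr_eq0 (negbTE (p_neq0 i)) orbF.
by move=> /eqP rho0; move: rho_gt d_ge1; rewrite rho0; lra.
Qed.

Lemma Vor_zero_q_disjoint i y : Vor Q0 0 y -> ~ Vor Q0 (q i) y.
Proof.
move=> V0 Vq; have d1 := d_ge1; have rd := rho_gt.
have a_le j : dot y (p j) <= 1 / 2.
  by have := Vor_le_sqnorm (p_in_Q0 j) V0; rewrite subr0 sqnorm_sub_p; lra.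
have : - (1 / 2 * d%:R) <= dot y (p i) by rewrite dot_p_compl lerN2 ler_sumr_neq.
have := Vor_le_sqnorm (fset1U1 0 Q) Vq; rewrite subr0 sqnorm_sub_q => q_le a_ge.
have : 0 <= rho * (dot y (p i) + 1 / 2 * d%:R) by apply: mulr_ge0; lra.
have : 0 < rho * (rho - d%:R) by apply: mulr_gt0; lra.
by lra.
Qed.

Lemma not_all_p_closer_than_zero y : ~ (forall j, sqnorm (y - p j) <= sqnorm y).
Proof.
move=> closer; have d1 := d_ge1.
have a_ge j : 1 / 2 <= dot y (p j) by have := closer j; rewrite sqnorm_sub_p; lra.
have := a_ge ord0; rewrite dot_p_compl.
have := ger_sumr_neq (fun j _ => a_ge j) (i := ord0); lra.
Qed.

(* Summing the inequalities against the p j, j != i, forces a_i <= -rho/2, as rho >= d. *)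
Lemma Vor_q_closer_than_zero i y : Vor Q (q i) y -> sqnorm (y - q i) <= sqnorm y.
Proof.
move=> Vq; have d1 := d_ge1; have rd := rho_gt.
pose c := (1 - rho ^+ 2 - 2 * rho * dot y (p i)) / 2.
have a_le j : dot y (p j) <= c.
  by have := Vor_le_sqnorm (p_in_Q j) Vq; rewrite sqnorm_sub_q sqnorm_sub_p /c; lra.
have : - (c * d%:R) <= dot y (p i) by rewrite [X in _ <= X]dot_p_compl lerN2 ler_sumr_neq.
rewrite /c sqnorm_sub_q; move: (dot y (p i)) => a a_ge.
have drho : 0 < d%:R * rho - 1 by nra.
have : a <= - rho / 2.
  rewrite leNgt; apply/negP => a_gt.
  have : 0 < (a + rho / 2) * (d%:R * rho - 1) by apply: mulr_gt0; lra.
  by nra.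
by nra.
Qed.

Definition join0 (B : {set 'I_d.+1}) := 0 |` [fset p j | j in B].
Implicit Types B : {set 'I_d.+1}.

Lemma join0P B x : x \in join0 B -> x = 0 \/ exists2 j, j \in B & x = p j.
Proof. by case/fset1UP => [|/imfsetP [j jB ->]]; [left | right; exists j]. Qed.

Lemma p_in_join0 B j : j \in B -> p j \in join0 B.
Proof. by move=> jB; apply/fset1UP; right; apply/imfsetP; exists j. Qed.

Lemma join0_neq0 B : join0 B != fset0.
Proof. by apply/fset0Pn; exists 0; apply: fset1U1. Qed.

Lemma join0_fsubset B : join0 B `<=` Q0.
Proof.
by apply/fsubsetP => x /join0P [->|[j _ ->]]; [apply: fset1U1 | apply: p_in_Q0].
Qed.

Lemma join0_eq_fset1 B : (join0 B == [fset 0]) = (B == finset.set0).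
Proof.
apply/eqP/eqP => [BE|->]; last first.
  by apply/fsetP => x; apply/idP/idP => [/join0P [->|[j]]|/fset1P ->]; rewrite ?inE ?eqxx.
apply/setP => j; rewrite inE; apply/negbTE/negP => jB.
by have := p_in_join0 jB; rewrite BE => /fset1P /eqP; rewrite (negbTE (p_neq0 j)).
Qed.

Lemma Q0_ball_empty y r : 0 <= r -> r ^+ 2 <= sqnorm y ->
  (forall j, r ^+ 2 <= sqnorm (y - p j)) -> (forall j, r ^+ 2 <= sqnorm (y - q j)) ->
  forall x, x \in Q0 -> r <= edist y x.
Proof.
by move=> r0 ry rp rq x /fset1UP [->|/QP [[j ->]|[j ->]]]; rewrite edist_geE ?subr0.
Qed.

Lemma facet_witness i B : i \notin B ->
  weight_witness Q0 (join0 B) (- (d%:R / 2) *: p i) (d%:R / 2).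
Proof.
move=> iB; set y := _ *: p i; have d1 := d_ge1; have rd := rho_gt.
have y_norm : sqnorm y = (d%:R / 2) ^+ 2 by rewrite sqnormZ p_unit mulr1 sqrrN.
have y_dot j : dot y (p j) = if j == i then - (d%:R / 2) else 1 / 2.
  by rewrite dotZl dot_pE; case: eqP => _; [ring | field; lra].
apply: empty_ball_witness => [|x /join0P [->|[j jB ->]]].
- apply: Q0_ball_empty; rewrite ?y_norm //; first lra.
    by move=> j; rewrite sqnorm_sub_p y_norm y_dot; case: eqP => _; lra.
  have rho_d : 0 <= rho * (rho - d%:R) by apply: mulr_ge0; lra.
  by move=> j; rewrite sqnorm_sub_q y_norm y_dot; case: eqP => _; nra.
- by apply: edist_sqnorm; rewrite ?subr0 //; lra.
- apply: edist_sqnorm; first lra.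
  by rewrite sqnorm_sub_p y_norm y_dot ifN; [lra | apply: contraNneq iB => <-].
Qed.

Lemma vertex_witness i : weight_witness Q0 (join0 [set i]) ((1 / 2) *: p i) (1 / 2).
Proof.
set y := _ *: p i; have d1 := d_ge1; have rd := rho_gt.
have e0 : 0 < d%:R^-1 :> R by rewrite invr_gt0; lra.
have e1 : d%:R^-1 <= 1 :> R by rewrite invf_le1; lra.
have y_norm : sqnorm y = (1 / 2) ^+ 2 by rewrite sqnormZ p_unit mulr1.
have y_dot j : dot y (p j) = if j == i then 1 / 2 else - d%:R^-1 / 2.
  by rewrite dotZl dot_pE; case: eqP => _; ring.
apply: empty_ball_witness => [|x /join0P [->|[j /set1P -> ->]]].
- apply: Q0_ball_empty; rewrite ?y_norm //; first lra.
    by move=> j; rewrite sqnorm_sub_p y_norm y_dot; case: eqP => _; lra.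
  have rho_e : 0 <= rho * (rho - d%:R^-1) by apply: mulr_ge0; lra.
  by move=> j; rewrite sqnorm_sub_q y_norm y_dot; case: eqP => _; nra.
- by apply: edist_sqnorm; rewrite ?subr0 //; lra.
- by apply: edist_sqnorm; rewrite ?sqnorm_sub_p ?y_norm ?y_dot ?eqxx; lra.
Qed.

Lemma Vor_zero_p_dot j y : Vor Q0 0 y -> Vor Q0 (p j) y -> dot y (p j) = 1 / 2.
Proof.
move=> V0 Vp; have := Vor_le_sqnorm (p_in_Q0 j) V0.
by have := Vor_le_sqnorm (fset1U1 0 Q) Vp; rewrite !subr0 sqnorm_sub_p; lra.
Qed.

Lemma weight_ge_half S y s j : 0 \in S -> p j \in S ->
  weight_witness Q0 S y s -> 1 / 2 <= s.
Proof.
move=> S0 Sp W; have [y0 V0] := W 0 S0; apply: le_trans y0.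
have := norm_dot_le_edist0 y (p_unit j); rewrite (Vor_zero_p_dot V0 (W _ Sp).2).
by rewrite ger0_norm //; lra.
Qed.

Lemma weight_ge_facet S y s i : 0 \in S -> (forall j, j != i -> p j \in S) ->
  weight_witness Q0 S y s -> d%:R / 2 <= s.
Proof.
move=> S0 Sp W; have [y0 V0] := W 0 S0; apply: le_trans y0.
have a_half j : j != i -> dot y (p j) = 1 / 2.
  by move=> ji; apply: Vor_zero_p_dot V0 (W _ (Sp j ji)).2.
have d1 := d_ge1; have := norm_dot_le_edist0 y (p_unit i).
rewrite dot_p_compl (eq_bigr _ a_half) sumr_neq_const normrN ger0_norm; lra.
Qed.

Lemma weight_ge_one y s : (forall j, edist y (p j) <= s) -> 1 <= s.
Proof.
move=> yp; have [j a_le0] : exists j, dot y (p j) <= 0.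
  apply: contrapT => /forallNP a_gt0.
  have a_ge0 j : 0 <= dot y (p j) by rewrite ltW // ltNge; apply/negP/a_gt0.
  by apply: (a_gt0 ord0); rewrite dot_p_compl oppr_le0 sumr_ge0.
apply: le_trans (yp j); rewrite edist_geE // sqnorm_sub_p.
by have := sqnorm_ge0 y; lra.
Qed.

Lemma new_simplex_join0 S : Delaunay Q0 S -> ~ Delaunay Q S ->
  exists2 B, B != [set: 'I_d.+1] & S = join0 B.
Proof.
move=> DS nDS; have [_ SQ0 [y V]] := DS.
have S0 : 0 \in S.
  apply: contra_notT nDS => S0; apply: Delaunay_fsubset (fsubsetU1 0 Q) _ DS.
  apply/fsubsetP => x xS; have /fset1UP [x0|//] := fsubsetP SQ0 x xS.
  by move: xS; rewrite x0 (negbTE S0).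
have Snq i : q i \notin S by apply/negP => /V; apply/Vor_zero_q_disjoint/V.
exists [set j | p j \in S].
  apply: contra_not_neq (@not_all_p_closer_than_zero y) => BT j.
  have : j \in [set j | p j \in S] by rewrite BT inE.
  by rewrite inE => /V /(Vor_le_sqnorm (fset1U1 0 Q)); rewrite subr0.
apply/fsetP => x; apply/idP/idP => [xS|/join0P [->//|[j]]]; last by rewrite inE => ? ->.
have /fset1UP [->|/QP [[j xj]|[j xj]]] := fsubsetP SQ0 x xS; first exact: fset1U1.
  by rewrite xj p_in_join0 // inE -xj.
by move: xS; rewrite xj (negbTE (Snq j)).
Qed.

Lemma join0_not_Delaunay_Q B : ~ Delaunay Q (join0 B).
Proof. by case=> _ /fsubsetP /(_ 0 (fset1U1 _ _)); rewrite (negbTE zero_notin_Q). Qed.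

Lemma new_simplexP S : Delaunay Q0 S /\ ~ Delaunay Q S <->
  exists2 B, B != [set: 'I_d.+1] & S = join0 B.
Proof.
split=> [[]|[B]]; first exact: new_simplex_join0.
rewrite -finset.subTset => /subsetPn [i _ iB] ->.
split; last exact: join0_not_Delaunay_Q.
exact: Delaunay_witness (join0_neq0 B) (join0_fsubset B) (facet_witness iB).
Qed.

Lemma dweight_join0_le B : B != [set: 'I_d.+1] -> dweight Q0 (join0 B) <= d%:R / 2.
Proof.
rewrite -finset.subTset => /subsetPn [i _ iB].
exact: dweight_le (join0_neq0 B) (facet_witness iB).
Qed.

Lemma dweight_join0_ge B : B != [set: 'I_d.+1] -> B != finset.set0 ->
  1 / 2 <= dweight Q0 (join0 B).
Proof.
rewrite -finset.subTset => /subsetPn [i _ /facet_witness W] /set0Pn [j jB].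
by apply: dweight_ge W _ => y s; apply: weight_ge_half (fset1U1 _ _) (p_in_join0 jB).
Qed.

Lemma dweight_join0_facet i : dweight Q0 (join0 (~: [set i])) = d%:R / 2.
Proof.
have iB : i \notin (~: [set i]) by rewrite !inE eqxx.
apply: dweight_eq (join0_neq0 _) (facet_witness iB) _ => y s.
apply: (weight_ge_facet (i := i)) (fset1U1 _ _) _ => j ji.
by apply: p_in_join0; rewrite !inE ji.
Qed.

Lemma dweight_join0_vertex i : dweight Q0 (join0 [set i]) = 1 / 2.
Proof.
apply: dweight_eq (join0_neq0 _) (@vertex_witness i) _ => y s.
by apply: weight_ge_half (fset1U1 _ _) (p_in_join0 (set11 i)).
Qed.

Lemma new_simplices_enum : exists L : seq {fset 'rV[R]_d},
  (size L <= 2 ^ d.+1)%N /\ forall S, (Delaunay Q0 S /\ ~ Delaunay Q S) <-> S \in L.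
Proof.
exists [seq join0 B | B <- enum (powerset [set: 'I_d.+1]) & B != [set: 'I_d.+1]].
split=> [|S]; first rewrite size_map size_filter (leq_trans (count_size _ _)) //.
  by rewrite -cardE card_powerset cardsT card_ord.
rewrite new_simplexP; split=> [[B BT ->]|/mapP [B]].
  by apply: map_f; rewrite mem_filter BT mem_enum powersetE finset.subsetT.
by rewrite mem_filter => /andP [BT _] ->; exists B.
Qed.

Lemma p_in_P i : p i \in P.
Proof. by apply/imfsetP; exists i. Qed.

Lemma P_neq0 : P != fset0.
Proof. by apply/fset0Pn; exists (p ord0); apply: p_in_P. Qed.

Lemma P_witness : weight_witness Q P 0 1.
Proof.
have rd := rho_gt; have d1 := d_ge1.
apply: empty_ball_witness => [x /QP [[j ->]|[j ->]]|x /imfsetP [j _ ->]].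
- by rewrite edist_geE // sqnorm_sub_p sqnorm0 dot0l; lra.
- by rewrite edist_geE // sqnorm_sub_q sqnorm0 dot0l; nra.
- by apply: edist_sqnorm; rewrite // sqnorm_sub_p sqnorm0 dot0l; lra.
Qed.

Lemma lost_simplexP T : Delaunay Q T /\ ~ Delaunay Q0 T <-> T = P.
Proof.
have Q_Q0 := fsubsetU1 0 Q.
split=> [[DT nDT]|->]; last first.
  split; first exact: Delaunay_witness P_neq0 (fsubsetUl _ _) P_witness.
  case=> _ _ [y V]; apply: (@not_all_p_closer_than_zero y) => j.
  by have := Vor_le_sqnorm (fset1U1 0 Q) (V _ (p_in_P j)); rewrite subr0.
have [T0 TQ [y V]] := DT.
have Tnq i : q i \notin T.
  apply: contra_notN nDT => qT; split=> //; first exact: fsubset_trans TQ Q_Q0.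
  exists y => x xT; apply: Vor_fset1U (V x xT) _.
  rewrite ler_edist subr0; apply: le_trans (Vor_q_closer_than_zero (V _ qT)).
  exact: Vor_le_sqnorm (q_in_Q i) (V x xT).
have Tp i : p i \in T.
  apply: contra_notT nDT => piT; have iB : i \notin ~: [set i] by rewrite !inE eqxx.
  apply: Delaunay_witness T0 (fsubset_trans TQ Q_Q0) _.
  apply: weight_witness_fsubset (facet_witness iB).
  apply/fsubsetP => x xT; have [[j xj]|[j xj]] := QP (fsubsetP TQ x xT); subst x.
    by apply: p_in_join0; rewrite !inE; apply: contraNneq piT => <-.
  by have := Tnq j; rewrite xT.
apply/fsetP => x; apply/idP/imfsetP => [xT|[j _ ->] //].
have [[j ->]|[j xj]] := QP (fsubsetP TQ x xT); first by exists j.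
by have := Tnq j; rewrite -xj xT.
Qed.

Lemma card_P : #|` P| = d.+1.
Proof.
rewrite card_imfset /=; last exact: p_inj.
rewrite -(card_uniqP (enum_finmem_uniq (mem (@predT 'I_d.+1)))) -[RHS]card_ord.
by apply: eq_card => i; rewrite enum_finmemE.
Qed.

Lemma dweight_P : dweight Q P = 1.
Proof.
apply: dweight_eq P_neq0 P_witness _ => y s W.
by apply: weight_ge_one => j; exact: (W _ (p_in_P j)).1.
Qed.

Theorem Delaunay_change :
  ((exists L : seq {fset 'rV[R]_d}, (size L <= 2 ^ d.+1)%N /\
      forall S, (Delaunay Q0 S /\ ~ Delaunay Q S) <-> S \in L)
   /\ (forall S, Delaunay Q0 S -> ~ Delaunay Q S -> dweight Q0 S <= d%:R / 2)
   /\ (exists S, [/\ Delaunay Q0 S, ~ Delaunay Q S & dweight Q0 S = d%:R / 2])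
   /\ (forall S, Delaunay Q0 S -> ~ Delaunay Q S -> S != [fset 0] ->
         1 / 2 <= dweight Q0 S)
   /\ (exists S, [/\ Delaunay Q0 S, ~ Delaunay Q S, S != [fset 0]
                   & dweight Q0 S = 1 / 2]))
  /\
  (exists S, [/\ forall T, (Delaunay Q T /\ ~ Delaunay Q0 T) <-> T = S,
                 #|` S| = d.+1 & dweight Q S = 1]).
Proof.
split; last by exists P; split; [exact: lost_simplexP | exact: card_P | exact: dweight_P].
have new S : Delaunay Q0 S -> ~ Delaunay Q S -> exists2 B, B != [set: 'I_d.+1] & S = join0 B.
  by move=> DS nDS; apply/new_simplexP.
split; first exact: new_simplices_enum.
split=> [S /new /[apply] [[B BT ->]]|]; first exact: dweight_join0_le.
split.
  have iB : @ord0 d \notin ~: [set ord0] by rewrite !inE eqxx.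
  exists (join0 (~: [set ord0])); split; last exact: dweight_join0_facet.
    exact: Delaunay_witness (join0_neq0 _) (join0_fsubset _) (facet_witness iB).
  exact: join0_not_Delaunay_Q.
split=> [S /new /[apply] [[B BT ->]]|].
  by rewrite join0_eq_fset1; apply: dweight_join0_ge.
exists (join0 [set ord0]); split; last exact: dweight_join0_vertex.
- exact: Delaunay_witness (join0_neq0 _) (join0_fsubset _) (@vertex_witness ord0).
- exact: join0_not_Delaunay_Q.
- by rewrite join0_eq_fset1; apply/set0Pn; exists ord0; rewrite inE.
Qed.

End Configuration.

Local Open Scope fset_scope.

Theorem lemma3p19 (R : realType) (d : nat) (p q c : 'I_d.+1 -> 'rV[R]_d) (rho : R) :
  (2 <= d)%N ->
  (* p_1, ..., p_{d+1}: vertices of a regular d-simplex inscribed in the unit sphere *)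
  (forall i, edist (p i) 0 = 1) ->
  (forall i j, i != j -> p i != p j) ->
  (forall i j k l, i != j -> k != l -> edist (p i) (p j) = edist (p k) (p l)) ->
  (* c i: circumcenter of the facet opposite p i *)
  (forall i, facet_circumcenter p i (c i)) ->
  (* q i: on the ray from 0 through c i, at distance rho from 0 *)
  20 * d%:R < rho ->
  (forall i, (exists t : R, 0 <= t /\ q i = t *: c i) /\ edist (q i) 0 = rho) ->
  let Q := [fset p i | i in 'I_d.+1] `|` [fset q i | i in 'I_d.+1] in
  let Q0 := 0 |` Q in
  (* (1) Dring(Q) \ D(Q) *)
  ((exists L : seq {fset 'rV[R]_d}, (size L <= 2 ^ d.+1)%N /\
      forall S, (Delaunay Q0 S /\ ~ Delaunay Q S) <-> S \in L)
   /\ (forall S, Delaunay Q0 S -> ~ Delaunay Q S -> dweight Q0 S <= d%:R / 2)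
   /\ (exists S, [/\ Delaunay Q0 S, ~ Delaunay Q S & dweight Q0 S = d%:R / 2])
   /\ (forall S, Delaunay Q0 S -> ~ Delaunay Q S -> S != [fset 0] ->
         1 / 2 <= dweight Q0 S)
   /\ (exists S, [/\ Delaunay Q0 S, ~ Delaunay Q S, S != [fset 0]
                   & dweight Q0 S = 1 / 2]))
  /\
  (* (2) D(Q) \ Dring(Q) is a single d-simplex of weight 1 *)
  (exists S, [/\ forall T, (Delaunay Q T /\ ~ Delaunay Q0 T) <-> T = S,
                 #|` S| = d.+1 & dweight Q S = 1]).
Proof.
move=> _ p_dist p_neq p_reg c_facet rho_gt q_ray Q Q0.
have p_unit i : sqnorm (p i) = 1 by rewrite -[p i]subr0 -sqr_edist p_dist expr1n.
have [p_dot p_sum] := regular_simplex_gram_of_edist p_unit p_neq p_reg.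
have q_def i : q i = - rho *: p i.
  have [t_ray q_dist] := q_ray i.
  exact: (ray_through_facet_circumcenter p_unit p_dot p_sum (c_facet i) t_ray q_dist).
have rho_gt' : d%:R < rho by have := ler0n R d; lra.
exact: Delaunay_change p_unit p_dot p_sum rho_gt' q_def.
Qed.
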